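(* Let $\mathbb B$ be a monad and $\mathbb C$ a comonad on a category $\mathcal A$ with a mixed distributive law $\theta\colon\mathrm{BC}\Rightarrow\mathrm{CB}$. Let $\mathrm F\dashv\mathrm U$ be the Eilenberg--Moore adjunction of $\mathbb B$, $\mathbb T$ the induced comonad on $\mathcal A^{\mathbb B}$, $\mathbb C^\theta$ the lifted comonad on $\mathcal A^{\mathbb B}$, and $\mathrm V\colon(\mathcal A^{\mathbb B})_{\mathbb C^\theta}\rightleftarrows\mathcal A^{\mathbb B}\colon\mathrm G$ the Eilenberg--Moore (forgetful--cofree) adjunction of $\mathbb C^\theta$. Let $\mathbb T^\theta$ be the comonad on $(\mathcal A^{\mathbb B})_{\mathbb C^\theta}$ given by $\mathrm T^\theta((X,\alpha),\delta)=((\mathrm B(X),\mu^{\mathbb B}_X),\theta_X\mathrm B(\delta))$, $\mathrm T^\theta(f)=\mathrm T(f)$, with comultiplication and counit those of $\mathbb T$, so that $\mathrm V\mathrm T^\theta=\mathrm T\mathrm V$, and let $\tilde\Lambda\colon\mathrm V\mathrm T^\theta\Rightarrow\mathrm T\mathrm V$ be the identity. Then the unique natural transformation $\tilde\Omega\colon\mathrm T^\theta\mathrm G\Rightarrow\mathrm G\mathrm T$ whose mate under $\mathrm V\dashv\mathrm G$ equals $\tilde\Lambda$ is given by $\tilde\Omega_{(X,\alpha)}=\theta_X$ for all $(X,\alpha)\in\mathrm{Ob}(\mathcal A^{\mathbb B})$. In particular, $\tilde\Omega$ implements a comonad extension $\mathbb T^\theta$ of $\mathbb T$ if and only if, for every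 $(X,\alpha)\in\mathrm{Ob}(\mathcal A^{\mathbb B})$, $\theta_X$ is an isomorphism from $\mathrm T^\theta(\mathrm G(X,\alpha))$ to $\mathrm G(\mathrm T(X,\alpha))$ in $(\mathcal A^{\mathbb B})_{\mathbb C^\theta}$.
   Context: A mixed distributive law $\theta$ of a monad $(\mathrm B,\mu^{\mathbb B},\eta^{\mathbb B})$ over a comonad $(\mathrm C,\Delta^{\mathbb C},\varepsilon^{\mathbb C})$ is $\theta\colon\mathrm{BC}\Rightarrow\mathrm{CB}$ with $\theta\circ\mu^{\mathbb B}\mathrm C=\mathrm C\mu^{\mathbb B}\circ\theta\mathrm B\circ\mathrm B\theta$, $\theta\circ\eta^{\mathbb B}\mathrm C=\mathrm C\eta^{\mathbb B}$, $\Delta^{\mathbb C}\mathrm B\circ\theta=\mathrm C\theta\circ\theta\mathrm C\circ\mathrm B\Delta^{\mathbb C}$, $\varepsilon^{\mathbb C}\mathrm B\circ\theta=\mathrm B\varepsilon^{\mathbb C}$. $\mathcal A^{\mathbb B}$ is the category of $\mathbb B$-algebras $(X,\alpha)$; $\mathrm F(X)=(\mathrm B(X),\mu^{\mathbb B}_X)$, $\mathrm U$ forgets, counit $\varepsilon_{(X,\alpha)}=\alpha$; $\mathbb T=(\mathrm{FU},\mathrm F\eta^{\mathbb B}\mathrm U,\varepsilon)$. $\mathbb C^\theta$: $\mathrm C^\theta(X,\alpha)=(\mathrm C(X),\mathrm C(\alpha)\theta_X)$, $\mathrm C^\theta(f)=\mathrm C(f)$, $\Delta^{\mathbb C^\theta}_{(X,\alpha)}=\Delta^{\mathbb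 C}_X$, $\varepsilon^{\mathbb C^\theta}_{(X,\alpha)}=\varepsilon^{\mathbb C}_X$. $(\mathcal A^{\mathbb B})_{\mathbb C^\theta}$ is the category of $\mathbb C^\theta$-coalgebras $(Y,\delta\colon Y\to\mathrm C^\theta(Y))$ (coassociative, counital); $\mathrm G(Y)=(\mathrm C^\theta(Y),\Delta^{\mathbb C^\theta}_Y)$, $\mathrm V$ forgets; unit $\eta'_{(Y,\delta)}=\delta$, counit $\varepsilon'=\varepsilon^{\mathbb C^\theta}$. The mate of $\tilde\Omega\colon\mathrm T^\theta\mathrm G\Rightarrow\mathrm G\mathrm T$ under $\mathrm V\dashv\mathrm G$ is $\varepsilon'\mathrm T\mathrm V\circ\mathrm V\tilde\Omega\mathrm V\circ\mathrm V\mathrm T^\theta\eta'$. ''$\tilde\Omega$ implements a comonad extension $\mathbb T^\theta$ of $\mathbb T$'' means $\tilde\Omega$ is a natural isomorphism and $(\mathrm G,\tilde\Omega)$ is a lax morphism of comonads from $\mathbb T^\theta$ to $\mathbb T$, i.e. $\mathrm G\Delta^{\mathbb T}\circ\tilde\Omega=\tilde\Omega\mathrm T\circ\mathrm T^\theta\tilde\Omega\circ\Delta^{\mathbb T^\theta}\mathrm G$ and $\mathrm G\varepsilon^{\mathbb T}\circ\tilde\Omega=\varepsilon^{\mathbb T^\theta}\mathrm G$. *)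

Record Category := {
  Ob :> Type;
  Hom : Ob -> Ob -> Type;
  idm : forall a, Hom a a;
  comp : forall {a b c}, Hom b c -> Hom a b -> Hom a c;
  comp_id_l : forall a b (f : Hom a b), comp (idm b) f = f;
  comp_id_r : forall a b (f : Hom a b), comp f (idm a) = f;
  comp_assoc : forall a b c d (h : Hom c d) (g : Hom b c) (f : Hom a b),
      comp h (comp g f) = comp (comp h g) f
}.

Arguments Hom {_} _ _.
Arguments idm {_} _.
Arguments comp {_ _ _ _} _ _.

Notation "g ∘ f" := (comp g f) (at level 40, left associativity).

Record Functor (A : Category) := {
  fobj :> Ob A -> Ob A;
  fmap : forall {a b : Ob A}, Hom a b -> Hom (fobj a) (fobj b);
  fmap_id : forall a, fmap (idm a) = idm (fobj a);
  fmap_comp : forall a b c (g : Hom b c) (f : Hom a b),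
      fmap (g ∘ f) = fmap g ∘ fmap f
}.
Arguments fmap {_} _ {_ _} _.

Record Monad (A : Category) := {
  mF :> Functor A;
  mu : forall a : Ob A, Hom (mF (mF a)) (mF a);
  eta : forall a : Ob A, Hom a (mF a);
  mu_nat : forall a b (f : Hom a b), fmap mF f ∘ mu a = mu b ∘ fmap mF (fmap mF f);
  eta_nat : forall a b (f : Hom a b), fmap mF f ∘ eta a = eta b ∘ f;
  mu_assoc : forall a, mu a ∘ fmap mF (mu a) = mu a ∘ mu (mF a);
  mu_eta_l : forall a, mu a ∘ eta (mF a) = idm (mF a);
  mu_eta_r : forall a, mu a ∘ fmap mF (eta a) = idm (mF a)
}.
Arguments mu {A} m a.
Arguments eta {A} m a.

Record Comonad (A : Category) := {
  cF :> Functor A;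
  delta : forall a : Ob A, Hom (cF a) (cF (cF a));
  eps : forall a : Ob A, Hom (cF a) a;
  delta_nat : forall a b (f : Hom a b),
      fmap cF (fmap cF f) ∘ delta a = delta b ∘ fmap cF f;
  eps_nat : forall a b (f : Hom a b), f ∘ eps a = eps b ∘ fmap cF f;
  delta_coassoc : forall a, fmap cF (delta a) ∘ delta a = delta (cF a) ∘ delta a;
  eps_delta_l : forall a, eps (cF a) ∘ delta a = idm (cF a);
  eps_delta_r : forall a, fmap cF (eps a) ∘ delta a = idm (cF a)
}.
Arguments delta {A} c a.
Arguments eps {A} c a.

Definition mixed_distributive_law {A : Category} (B : Monad A) (C : Comonad A)
    (theta : forall a : Ob A, Hom (B (C a)) (C (B a))) : Prop :=
  (forall a b (f : Hom a b),
      theta b ∘ fmap B (fmap C f) = fmap C (fmap B f) ∘ theta a) /\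
  (forall a, theta a ∘ mu B (C a) = fmap C (mu B a) ∘ theta (B a) ∘ fmap B (theta a)) /\
  (forall a, theta a ∘ eta B (C a) = fmap C (eta B a)) /\
  (forall a, delta C (B a) ∘ theta a = fmap C (theta a) ∘ theta (C a) ∘ fmap B (delta C a)) /\
  (forall a, eps C (B a) ∘ theta a = fmap B (eps C a)).

Section EM.
Context {A : Category} (B : Monad A) (C : Comonad A)
        (theta : forall a : Ob A, Hom (B (C a)) (C (B a))).

Definition is_alg (X : Ob A) (alpha : Hom (B X) X) : Prop :=
  alpha ∘ eta B X = idm X /\ alpha ∘ fmap B alpha = alpha ∘ mu B X.

Definition alg_hom {X : Ob A} (alpha : Hom (B X) X) {Y : Ob A} (beta : Hom (B Y) Y)
    (f : Hom X Y) : Prop :=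
  f ∘ alpha = beta ∘ fmap B f.

(* The lifted comonad C^theta: C^theta(X, alpha) = (C X, C(alpha) theta_X) *)
Definition Ctheta_act {X : Ob A} (alpha : Hom (B X) X) : Hom (B (C X)) (C X) :=
  fmap C alpha ∘ theta X.

Definition is_coalg (X : Ob A) (alpha : Hom (B X) X) (dl : Hom X (C X)) : Prop :=
  is_alg X alpha /\
  alg_hom alpha (Ctheta_act alpha) dl /\
  delta C X ∘ dl = fmap C dl ∘ dl /\
  eps C X ∘ dl = idm X.

Definition coalg_hom {X : Ob A} (alpha : Hom (B X) X) (dX : Hom X (C X))
    {Y : Ob A} (beta : Hom (B Y) Y) (dY : Hom Y (C Y)) (f : Hom X Y) : Prop :=
  alg_hom alpha beta f /\ dY ∘ f = fmap C f ∘ dX.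

(* Isomorphisms in (A^B)_{C^theta} (composition and identities are those of A) *)
Definition coalg_iso {X : Ob A} (alpha : Hom (B X) X) (dX : Hom X (C X))
    {Y : Ob A} (beta : Hom (B Y) Y) (dY : Hom Y (C Y)) (f : Hom X Y) : Prop :=
  coalg_hom alpha dX beta dY f /\
  exists g : Hom Y X, coalg_hom beta dY alpha dX g /\
                      g ∘ f = idm X /\ f ∘ g = idm Y.

(* A family Omega_{(X,alpha)} : T^theta G (X,alpha) -> G T (X,alpha), where
   T^theta G (X,alpha) = ((B C X, mu_{CX}), theta_{CX} B(Delta_X))
   G T (X,alpha)       = ((C B X, C(mu_X) theta_{BX}), Delta_{BX}). *)
Definition OmegaFamily :=
  forall (X : Ob A) (alpha : Hom (B X) X), Hom (B (C X)) (C (B X)).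

Definition TthG_act (X : Ob A) : Hom (B (B (C X))) (B (C X)) := mu B (C X).
Definition TthG_coact (X : Ob A) : Hom (B (C X)) (C (B (C X))) :=
  theta (C X) ∘ fmap B (delta C X).
Definition GT_act (X : Ob A) : Hom (B (C (B X))) (C (B X)) :=
  Ctheta_act (mu B X).
Definition GT_coact (X : Ob A) : Hom (C (B X)) (C (C (B X))) := delta C (B X).

(* Omega is a natural transformation T^theta G => G T of functors
   A^B -> (A^B)_{C^theta}; on morphisms T^theta G (f) = B(C f), G T (f) = C(B f). *)
Definition is_nat_TthG_GT (Om : OmegaFamily) : Prop :=
  (forall X alpha, is_alg X alpha ->
     coalg_hom (TthG_act X) (TthG_coact X) (GT_act X) (GT_coact X) (Om X alpha)) /\
  (forall X alpha Y beta (f : Hom X Y), is_alg X alpha -> is_alg Y beta ->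
     alg_hom alpha beta f ->
     Om Y beta ∘ fmap B (fmap C f) = fmap C (fmap B f) ∘ Om X alpha).

(* Component at ((X,alpha),delta) of the mate
   eps' T V o V Omega V o V T^theta eta' : V T^theta => T V,
   i.e. eps^C_{BX} o Omega_{(X,alpha)} o B(delta). *)
Definition mate_comp (Om : OmegaFamily) {X : Ob A} (alpha : Hom (B X) X)
    (dl : Hom X (C X)) : Hom (B X) (B X) :=
  eps C (B X) ∘ Om X alpha ∘ fmap B dl.

(* The mate equals Lambda~ = identity of V T^theta = T V *)
Definition mate_is_identity (Om : OmegaFamily) : Prop :=
  forall X alpha dl, is_coalg X alpha dl -> mate_comp Om alpha dl = idm (B X).

(* Omega implements a comonad extension T^theta of T:
   natural isomorphism + (G, Omega) lax morphism of comonads.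
   Comonad T on A^B: Delta^T_{(X,alpha)} = B(eta_X), eps^T_{(X,alpha)} = alpha;
   T^theta has the same comultiplication and counit. *)
Definition implements_comonad_extension (Om : OmegaFamily) : Prop :=
  is_nat_TthG_GT Om /\
  (forall X alpha, is_alg X alpha ->
     coalg_iso (TthG_act X) (TthG_coact X) (GT_act X) (GT_coact X) (Om X alpha)) /\
  (forall X alpha, is_alg X alpha ->
     fmap C (fmap B (eta B X)) ∘ Om X alpha =
     Om (B X) (mu B X) ∘ fmap B (Om X alpha) ∘ fmap B (eta B (C X))) /\
  (forall X alpha, is_alg X alpha ->
     fmap C alpha ∘ Om X alpha = Ctheta_act alpha).

End EM.

Definition theta_family {A : Category} (B : Monad A) (C : Comonad A)
    (theta : forall a : Ob A, Hom (B (C a)) (C (B a))) : OmegaFamily B C :=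
  fun X _ => theta X.

(* The cofree coalgebra G(X, alpha) = (C X, delta_X) has counit eps_X, so a
   coalgebra morphism into it is determined by its composite with eps.  For a
   natural Omega whose mate is the identity, evaluating the mate at the cofree
   coalgebra and transporting along eps_X gives eps_{BX} Omega_{(X,alpha)} =
   B(eps_X); the same composite for theta is B(eps_X) by the counit axiom of the
   distributive law, so Omega = theta.  That theta itself is natural, a coalgebra
   morphism, and a lax comonad morphism are direct consequences of the axioms of
   theta, so being a comonad extension reduces to theta_X being invertible. *)


Lemma cofree_coalg_hom_factor {A : Category} (C : Comonad A) {Y Z : Ob A}
    (dY : Hom Y (C Y)) (f : Hom Y (C Z)) :
  delta C Z ∘ f = fmap C f ∘ dY -> f = fmap C (eps C Z ∘ f) ∘ dY.
Proof.
  intros Hf.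
  rewrite fmap_comp, <- comp_assoc, <- Hf, comp_assoc, eps_delta_r, comp_id_l.
  reflexivity.
Qed.

Section MixedDistributiveLaw.

Variables (A : Category) (B : Monad A) (C : Comonad A)
  (theta : forall a : Ob A, Hom (B (C a)) (C (B a))).
Hypothesis Htheta : mixed_distributive_law B C theta.

Lemma theta_natural a b (f : Hom a b) :
  theta b ∘ fmap B (fmap C f) = fmap C (fmap B f) ∘ theta a.
Proof. apply Htheta. Qed.

Lemma theta_mu a :
  theta a ∘ mu B (C a) = fmap C (mu B a) ∘ theta (B a) ∘ fmap B (theta a).
Proof. apply Htheta. Qed.

Lemma theta_eta a : theta a ∘ eta B (C a) = fmap C (eta B a).
Proof. apply Htheta. Qed.

Lemma theta_delta a :
  delta C (B a) ∘ theta a = fmap C (theta a) ∘ theta (C a) ∘ fmap B (delta C a).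
Proof. apply Htheta. Qed.

Lemma theta_eps a : eps C (B a) ∘ theta a = fmap B (eps C a).
Proof. apply Htheta. Qed.

Lemma Ctheta_act_is_alg X alpha :
  is_alg B X alpha -> is_alg B (C X) (Ctheta_act B C theta alpha).
Proof.
  intros [Halg_eta Halg_mu]. unfold Ctheta_act. split.
  - rewrite <- comp_assoc, theta_eta, <- fmap_comp, Halg_eta, fmap_id.
    reflexivity.
  - rewrite fmap_comp, comp_assoc, <- (comp_assoc _ _ _ _ _ (fmap C alpha)).
    rewrite theta_natural, comp_assoc, <- fmap_comp, Halg_mu, fmap_comp.
    rewrite <- !comp_assoc, theta_mu, !comp_assoc.
    reflexivity.
Qed.

Lemma delta_alg_hom X (alpha : Hom (B X) X) :
  alg_hom B (Ctheta_act B C theta alpha)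
    (Ctheta_act B C theta (Ctheta_act B C theta alpha)) (delta C X).
Proof.
  unfold alg_hom, Ctheta_act.
  rewrite comp_assoc, <- delta_nat, <- comp_assoc, theta_delta, !fmap_comp.
  rewrite !comp_assoc. reflexivity.
Qed.

Lemma eps_alg_hom X (alpha : Hom (B X) X) :
  alg_hom B (Ctheta_act B C theta alpha) alpha (eps C X).
Proof.
  unfold alg_hom, Ctheta_act.
  rewrite comp_assoc, <- eps_nat, <- comp_assoc, theta_eps. reflexivity.
Qed.

Lemma cofree_is_coalg X alpha :
  is_alg B X alpha ->
  is_coalg B C theta (C X) (Ctheta_act B C theta alpha) (delta C X).
Proof.
  intros Halg. split; [| split; [| split]].
  - apply Ctheta_act_is_alg; exact Halg.
  - apply delta_alg_hom.
  - symmetry. apply delta_coassoc.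
  - apply eps_delta_l.
Qed.

Lemma theta_coalg_hom X :
  coalg_hom B C (TthG_act B C X) (TthG_coact B C theta X)
    (GT_act B C theta X) (GT_coact B C X) (theta X).
Proof.
  unfold coalg_hom, alg_hom, TthG_act, TthG_coact, GT_act, GT_coact, Ctheta_act.
  split.
  - apply theta_mu.
  - rewrite theta_delta, comp_assoc. reflexivity.
Qed.

Lemma theta_family_natural : is_nat_TthG_GT B C theta (theta_family B C theta).
Proof.
  split.
  - intros X alpha _. apply theta_coalg_hom.
  - intros X alpha Y beta f _ _ _. apply theta_natural.
Qed.

Lemma theta_family_mate_identity :
  mate_is_identity B C theta (theta_family B C theta).
Proof.
  intros X alpha dl (_ & _ & _ & Hcounit). unfold mate_comp, theta_family.
  rewrite theta_eps, <- fmap_comp, Hcounit, fmap_id. reflexivity.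
Qed.

Lemma eps_comp_of_mate_identity (Om : OmegaFamily B C) X alpha :
  is_nat_TthG_GT B C theta Om -> mate_is_identity B C theta Om ->
  is_alg B X alpha -> eps C (B X) ∘ Om X alpha = fmap B (eps C X).
Proof.
  intros [_ Hnat] Hmate Halg.
  pose proof (cofree_is_coalg X alpha Halg) as Hcofree.
  specialize (Hmate _ _ _ Hcofree). unfold mate_comp in Hmate.
  specialize (Hnat _ _ _ _ (eps C X) (proj1 Hcofree) Halg (eps_alg_hom X alpha)).
  rewrite <- (comp_id_r _ _ _ (_ ∘ Om X alpha)), <- fmap_id, <- eps_delta_r.
  rewrite fmap_comp, !comp_assoc, <- (comp_assoc _ _ _ _ _ (eps C (B X))), Hnat.
  rewrite comp_assoc, <- eps_nat, <- !comp_assoc, (comp_assoc _ _ _ _ _ (eps _ _)).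
  rewrite Hmate. apply comp_id_r.
Qed.

Lemma theta_eps_factor X :
  fmap C (fmap B (eps C X)) ∘ theta (C X) ∘ fmap B (delta C X) = theta X.
Proof.
  rewrite <- theta_natural, <- comp_assoc, <- fmap_comp, eps_delta_r, fmap_id.
  apply comp_id_r.
Qed.

Lemma nat_mate_identity_unique (Om : OmegaFamily B C) :
  is_nat_TthG_GT B C theta Om -> mate_is_identity B C theta Om ->
  forall X alpha, is_alg B X alpha -> Om X alpha = theta X.
Proof.
  intros Hnat Hmate X alpha Halg.
  destruct (proj1 Hnat X alpha Halg) as [_ Hcoact].
  rewrite (cofree_coalg_hom_factor C _ _ Hcoact).
  rewrite (eps_comp_of_mate_identity Om X alpha Hnat Hmate Halg).
  unfold TthG_coact. rewrite comp_assoc. apply theta_eps_factor.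
Qed.

Lemma theta_lax_comult X :
  fmap C (fmap B (eta B X)) ∘ theta X =
  theta (B X) ∘ fmap B (theta X) ∘ fmap B (eta B (C X)).
Proof.
  rewrite <- comp_assoc, <- fmap_comp, theta_eta, theta_natural. reflexivity.
Qed.

End MixedDistributiveLaw.

Theorem lemma3p6 (A : Category) (B : Monad A) (C : Comonad A)
  (theta : forall a : Ob A, Hom (B (C a)) (C (B a))) :
  mixed_distributive_law B C theta ->
  (* theta defines a natural transformation T^theta G => G T whose mate is the identity *)
  (is_nat_TthG_GT B C theta (theta_family B C theta) /\
   mate_is_identity B C theta (theta_family B C theta)) /\
  (* and it is the unique such one *)
  (forall Om : OmegaFamily B C,
     is_nat_TthG_GT B C theta Om -> mate_is_identity B C theta Om ->
     forall (X : Ob A) (alpha : Hom (B X) X), is_alg B X alpha -> Om X alpha = theta X) /\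
  (* in particular: comonad extension iff every theta_X is an iso *)
  (implements_comonad_extension B C theta (theta_family B C theta) <->
   forall (X : Ob A) (alpha : Hom (B X) X), is_alg B X alpha ->
     coalg_iso B C (TthG_act B C X) (TthG_coact B C theta X)
       (GT_act B C theta X) (GT_coact B C X) (theta X)).
Proof.
  intros Htheta. split; [split | split].
  - exact (theta_family_natural A B C theta Htheta).
  - exact (theta_family_mate_identity A B C theta Htheta).
  - exact (nat_mate_identity_unique A B C theta Htheta).
  - split.
    + intros (_ & Hiso & _). exact Hiso.
    + intros Hiso. refine (conj _ (conj Hiso (conj _ _))).
      * exact (theta_family_natural A B C theta Htheta).
      * intros X alpha _. exact (theta_lax_comult A B C theta Htheta X).
      * reflexivity.
Qed.
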